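(* The polyhedron $$\mathcal{P}^{\text{odd-cover-dir}}:=\Big\{x\in\mathbb{R}^{E}_+ : \sum_{e\in P}x_e\ge 1 \text{ for every } s\rightarrow t \text{ odd-path } P \text{ in } D\Big\}$$ is not necessarily half-integral for directed acyclic graphs $D=(V,E)$ with distinct nodes $s,t\in V$. That is, there exist a DAG $D$ and nodes $s,t$ for which $\mathcal{P}^{\text{odd-cover-dir}}$ has an extreme point with some coordinate that is not an integer multiple of $1/2$.
   Context: Paths are simple directed paths. An odd-path is a path with an odd number of edges. A polyhedron is half-integral if every coordinate of each of its extreme points is an integer multiple of $1/2$. *)

From mathcomp Require Import all_boot.
From Stdlib Require Import Reals ZArith.

Set Implicit Arguments.
Unset Strict Implicit.
Unset Printing Implicit Defensive.

Definition simple_digraph (V E : finType) (src tgt : E -> V) : Prop :=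
  forall e f : E, src e = src f -> tgt e = tgt f -> e = f.

Fixpoint consecutive (V E : finType) (src tgt : E -> V) (p : seq E) : bool :=
  match p with
  | e :: ((f :: _) as q) => (tgt e == src f) && consecutive src tgt q
  | _ => true
  end.

Definition walk (V E : finType) (src tgt : E -> V) (u v : V) (p : seq E)
  : Prop :=
  match p with
  | [::] => u = v
  | e :: _ => [/\ src e = u, tgt (last e p) = v & consecutive src tgt p]
  end.

Definition acyclic (V E : finType) (src tgt : E -> V) : Prop :=
  forall (u : V) (p : seq E), p <> [::] -> ~ walk src tgt u u p.

Definition dpath (V E : finType) (src tgt : E -> V) (s t : V) (p : seq E)
  : Prop :=
  walk src tgt s t p /\ uniq (s :: map tgt p).

Definition odd_path (V E : finType) (src tgt : E -> V) (s t : V) (p : seq E)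
  : Prop :=
  dpath src tgt s t p /\ odd (size p).

Definition path_sum (E : finType) (x : E -> R) (p : seq E) : R :=
  foldr (fun e acc => (x e + acc)%R) 0%R p.

Definition in_odd_cover_dir (V E : finType) (src tgt : E -> V) (s t : V)
  (x : E -> R) : Prop :=
  (forall e, (0 <= x e)%R) /\
  (forall p, odd_path src tgt s t p -> (1 <= path_sum x p)%R).

Definition extreme_point (V E : finType) (src tgt : E -> V) (s t : V)
  (x : E -> R) : Prop :=
  in_odd_cover_dir src tgt s t x /\
  forall (y z : E -> R) (l : R),
    in_odd_cover_dir src tgt s t y -> in_odd_cover_dir src tgt s t z ->
    (0 < l < 1)%R -> (forall e, x e = l * y e + (1 - l) * z e)%R ->
    forall e, y e = z e.

Definition half_integer (r : R) : Prop :=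
  exists k : Z, r = (IZR k * / 2)%R.

(** Take the point x with x = 1/3 on three arcs a, b, c, x = 2/3 on an arc d
    entering t, and x = 0 elsewhere.  The DAG is built so that every odd s-t
    path collects at least 1 (checked by enumerating all s-t walks, which are
    short since the vertices are topologically ranked), and so that the four
    odd paths through a-b-c, a-d, b-d and c-d are tight.
    Together with the zero coordinates, these tight constraints force
    w_a + w_b + w_c = 1 and w_a + w_d = w_b + w_d = w_c + w_d = 1, whose
    unique solution is x; hence x is a vertex, and 1/3 is not half-integral. *)
From mathcomp Require Import all_boot.
From Stdlib Require Import Reals Lra Lia.

Set Implicit Arguments.
Unset Strict Implicit.
Unset Printing Implicit Defensive.

Local Open Scope R_scope.

Lemma convex_comb_at_lower_bound (m a b l : R) :
  0 < l < 1 -> m <= a -> m <= b -> l * a + (1 - l) * b = m -> a = m /\ b = m.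
Proof. move=> [l_gt0 l_lt1] ma mb lab; split; nra. Qed.

Lemma not_half_integer_third : ~ half_integer (1 / 3).
Proof.
move=> [k third_eq].
have : IZR (k * 3) = IZR 2 by rewrite mult_IZR; lra.
move/eq_IZR; lia.
Qed.

Section PathSum.

Variable E : finType.

Lemma path_sum_convex (x y z : E -> R) (l : R) (p : seq E) :
  (forall e, x e = l * y e + (1 - l) * z e) ->
  path_sum x p = l * path_sum y p + (1 - l) * path_sum z p.
Proof. by move=> xE; elim: p => [|e p IH] /=; rewrite ?IH ?xE; ring. Qed.

Lemma path_sum_filter (x : E -> R) (a : pred E) (p : seq E) :
  (forall e, ~~ a e -> x e = 0) -> path_sum x p = path_sum x (filter a p).
Proof.
move=> x0; elim: p => [|e p IH] //=.
by case: ifP => ae; rewrite /= IH // x0 ?ae // Rplus_0_l.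
Qed.

Lemma path_sum_scaled_nat (f : E -> nat) (c : R) (p : seq E) :
  path_sum (fun e => INR (f e) * c) p = INR (sumn (map f p)) * c.
Proof. by elim: p => [|e p IH] /=; rewrite ?IH ?plus_INR; ring. Qed.

End PathSum.

Section Walks.

Variables (V E : finType) (src tgt : E -> V).

Lemma walk_cons (u v : V) (e : E) (q : seq E) :
  walk src tgt u v (e :: q) -> src e = u /\ walk src tgt (tgt e) v q.
Proof. by case: q => [|f q] [? ? /=] //; case/andP=> /eqP. Qed.

Definition walkb (u v : V) (p : seq E) : bool :=
  if p is e :: _ then
    [&& src e == u, tgt (last e p) == v & consecutive src tgt p]
  else u == v.

Lemma walkbP (u v : V) (p : seq E) : reflect (walk src tgt u v p) (walkb u v p).
Proof.
case: p => [|e p]; first exact: eqP.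
apply: (iffP and3P) => [[/eqP ? /eqP ? ?] | [-> -> ?]]; first by split.
by rewrite !eqxx.
Qed.

Definition odd_pathb (s t : V) (p : seq E) : bool :=
  [&& walkb s t p, uniq (s :: map tgt p) & odd (size p)].

Lemma odd_pathbP (s t : V) (p : seq E) :
  reflect (odd_path src tgt s t p) (odd_pathb s t p).
Proof.
apply: (iffP and3P) => [[/walkbP ? ? ?] | [[/walkbP ? ?] ?]]; by do ?split.
Qed.

Section Ranking.

Variable r : V -> nat.
Hypothesis rank_arc : forall e, (r (src e) < r (tgt e))%nat.

Lemma walk_rank (u v : V) (p : seq E) :
  walk src tgt u v p -> (r u + size p <= r v)%nat.
Proof.
elim: p u => [|e q IH] u; first by move=> /= ->; rewrite addn0.
move=> /walk_cons [<- /IH rank_q] /=.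
by rewrite addnS -addSn (leq_trans _ rank_q) // leq_add2r rank_arc.
Qed.

Lemma acyclic_of_rank : acyclic src tgt.
Proof.
move=> u [|e p] // _ /walk_rank.
by rewrite -[X in (_ <= X)%nat]addn0 leq_add2l.
Qed.

End Ranking.

Variables (arcs : seq E) (t : V).

(* Arcs are drawn from a list rather than from [enum E] so that the
   enumeration reduces by computation. *)
Fixpoint walks_to (k : nat) (u : V) : seq (seq E) :=
  (if u == t then [:: [::]] else [::]) ++
  if k is k'.+1 then
    [seq e :: q | e <- [seq e <- arcs | src e == u], q <- walks_to k' (tgt e)]
  else [::].

Hypothesis mem_arcs : forall e, e \in arcs.

Lemma walks_toP (k : nat) (u : V) (p : seq E) :
  walk src tgt u t p -> (size p <= k)%nat -> p \in walks_to k u.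
Proof.
elim: p k u => [|e q IH] [|k] u //=; rewrite mem_cat;
  try by move=> -> _; rewrite eqxx mem_head.
move=> /walk_cons [src_e walk_q] size_q; apply/orP; right.
apply/allpairsPdep; exists e, q; split=> //; last exact: IH.
by rewrite mem_filter src_e eqxx mem_arcs.
Qed.

End Walks.

Section ExtremePoint.

Variables (V E : finType) (src tgt : E -> V) (s t : V).

Lemma extreme_point_of_tight (x : E -> R) (T : seq (seq E)) :
  in_odd_cover_dir src tgt s t x ->
  (forall p, p \in T -> odd_path src tgt s t p /\ path_sum x p = 1) ->
  (forall w, (forall e, x e = 0 -> w e = 0) ->
     (forall p, p \in T -> path_sum w p = 1) -> forall e, w e = x e) ->
  extreme_point src tgt s t x.
Proof.
move=> x_in T_tight unique_sol.
split=> // y z l [y_ge0 y_cover] [z_ge0 z_cover] l01 xyz.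
have zeros e : x e = 0 -> y e = 0 /\ z e = 0.
  by move=> x0; apply: (convex_comb_at_lower_bound l01); rewrite // -xyz.
have tights p : p \in T -> path_sum y p = 1 /\ path_sum z p = 1.
  move=> /T_tight [odd_p x1]; apply: (convex_comb_at_lower_bound l01).
  - exact: y_cover.
  - exact: z_cover.
  - by rewrite -(path_sum_convex _ xyz).
move=> e; rewrite (unique_sol y) ?(unique_sol z) // => f.
- by move/zeros=> [].
- by move/tights=> [].
- by move/zeros=> [].
- by move/tights=> [].
Qed.

End ExtremePoint.

Local Close Scope R_scope.

(* The counterexample: vertices are numbered in topological order, s = 0 and
   t = 12; the arcs a, b, c, d are arcs 0, 1, 2, 3.  Ordinals are built with
   [%%] rather than [inord], whose definition does not reduce. *)
Definition vertex := 'I_13.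
Definition arc := 'I_17.

Definition vertex_of (k : nat) : vertex := Ordinal (ltn_pmod k (isT : 0 < 13)).
Definition arc_of (k : nat) : arc := Ordinal (ltn_pmod k (isT : 0 < 17)).

Definition arc_list : seq arc := map arc_of (iota 0 17).

Lemma mem_arc_list (e : arc) : e \in arc_list.
Proof.
have -> : e = arc_of e by apply: val_inj; rewrite /= modn_small.
by apply: map_f; rewrite mem_iota /=.
Qed.

Lemma all_arcs (P : pred arc) : all P arc_list -> forall e, P e.
Proof. by move=> /allP all_P e; apply: all_P; exact: mem_arc_list. Qed.

Definition arc_ends : seq (nat * nat) :=
  [:: (0, 2); (4, 5); (7, 8); (11, 12); (2, 3); (3, 4); (5, 6); (6, 7); (8, 9);
      (9, 12); (2, 11); (0, 1); (1, 4); (5, 11); (0, 7); (8, 10); (10, 11)].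

Definition src_arc (e : arc) : vertex := vertex_of (nth (0, 0) arc_ends e).1.
Definition tgt_arc (e : arc) : vertex := vertex_of (nth (0, 0) arc_ends e).2.

Definition s_vertex : vertex := ord0.
Definition t_vertex : vertex := ord_max.

Definition thirds (e : arc) : nat := nth 0 [:: 1; 1; 1; 2] e.

Definition xstar (e : arc) : R := (INR (thirds e) * (1 / 3))%R.

Notation "'e_' k" := (@Ordinal 17 k isT) (at level 0, k at level 0).

Definition tight_paths : seq (seq arc) :=
  [:: [:: e_ 0; e_ 4; e_ 5; e_ 1; e_ 6; e_ 7; e_ 2; e_ 8; e_ 9];
      [:: e_ 0; e_ 10; e_ 3];
      [:: e_ 11; e_ 12; e_ 1; e_ 13; e_ 3];
      [:: e_ 14; e_ 2; e_ 15; e_ 16; e_ 3]].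

Lemma src_arc_lt_tgt (e : arc) : src_arc e < tgt_arc e.
Proof.
by apply: (all_arcs (P := fun e => src_arc e < tgt_arc e)); vm_compute.
Qed.

Lemma simple_digraph_arcs : simple_digraph src_arc tgt_arc.
Proof.
have simple_arcs : all (fun e => all (fun f =>
    (src_arc e == src_arc f) && (tgt_arc e == tgt_arc f) ==> (e == f)) arc_list)
    arc_list by vm_compute.
move=> e f src_ef tgt_ef; apply/eqP.
have /implyP := all_arcs (all_arcs simple_arcs e) f.
by apply; rewrite src_ef tgt_ef !eqxx.
Qed.

Lemma odd_walks_weigh_three :
  all (fun p => odd (size p) ==> (3 <= sumn (map thirds p)))
      (walks_to src_arc tgt_arc arc_list t_vertex 12 s_vertex).
Proof. by vm_compute. Qed.

Lemma xstar_in_polyhedron :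
  in_odd_cover_dir src_arc tgt_arc s_vertex t_vertex xstar.
Proof.
split=> [e | p [[walk_p _] odd_p]].
  by rewrite /xstar; have := pos_INR (thirds e); lra.
have size_p : size p <= 12 by exact: (walk_rank src_arc_lt_tgt walk_p).
have := allP odd_walks_weigh_three p (walks_toP mem_arc_list walk_p size_p).
rewrite odd_p /xstar path_sum_scaled_nat => /leP /le_INR /= three_le.
(* the two sums differ only in how the arc type is written, which lra sees *)
set n := sumn _ in three_le *; lra.
Qed.

Lemma tight_paths_tight (p : seq arc) : p \in tight_paths ->
  odd_path src_arc tgt_arc s_vertex t_vertex p /\ path_sum xstar p = 1%R.
Proof.
have : all (fun p => odd_pathb src_arc tgt_arc s_vertex t_vertex p
                     && (sumn (map thirds p) == 3)) tight_paths.
  by vm_compute.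
move=> /allP all_tight /all_tight /andP [/odd_pathbP odd_p /eqP sum_p].
by split=> //; rewrite /xstar path_sum_scaled_nat sum_p /=; lra.
Qed.

Lemma xstar_off (e : arc) : ~~ (e < 4) -> xstar e = 0%R.
Proof.
by rewrite -leqNgt /xstar /thirds => e_ge4; rewrite nth_default //=; lra.
Qed.

Lemma xstar_unique_solution (w : arc -> R) :
  (forall e, xstar e = 0%R -> w e = 0%R) ->
  (forall p, p \in tight_paths -> path_sum w p = 1%R) ->
  forall e, w e = xstar e.
Proof.
move=> w0 w_tight.
have w_off (e : arc) : ~~ (e < 4) -> w e = 0%R by move/xstar_off/w0.
have tight k :
    k < 4 -> path_sum w [seq e : arc <- nth [::] tight_paths k | e < 4] = 1%R.
  by move=> k_lt4; rewrite -(path_sum_filter _ w_off); apply/w_tight/mem_nth.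
move: (tight 0 isT) (tight 1 isT) (tight 2 isT) (tight 3 isT).
move=> /= abc ad bd cd.
case=> [[|[|[|[|k]]]] lt_k]; last by rewrite w_off ?xstar_off.
all: rewrite (bool_irrelevance lt_k isT) /xstar /=; lra.
Qed.

Theorem theorem3 :
  exists (V E : finType) (src tgt : E -> V) (s t : V),
    simple_digraph src tgt /\ acyclic src tgt /\ s <> t /\
    exists x : E -> R,
      extreme_point src tgt s t x /\ exists e : E, ~ half_integer (x e).
Proof.
exists vertex, arc, src_arc, tgt_arc, s_vertex, t_vertex.
split; first exact: simple_digraph_arcs.
split; first exact: acyclic_of_rank src_arc_lt_tgt.
split; first by move/(congr1 val).
exists xstar; split.
  apply: (extreme_point_of_tight xstar_in_polyhedron tight_paths_tight).
  exact: xstar_unique_solution.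
exists (e_ 0); rewrite /xstar /= Rmult_1_l; exact: not_half_integer_third.
Qed.
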